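(* If $G$ is a uniformly dense (finite, simple) graph containing a cycle, then its girth satisfies $\operatorname{gir}(G)\ge\rho(G)/(\rho(G)-1)$.
   Context: For $A\subseteq E$, $c(A)$ is the number of components of $(V,A)$, $\operatorname{rank}(A)=|V|-c(A)$, $\rho(A)=|A|/\operatorname{rank}(A)$, $\rho(G)=\rho(E)$; $G$ is uniformly dense if $\rho(A)\le\rho(G)$ for all nonempty $A\subseteq E$. The girth $\operatorname{gir}(G)$ is the number of edges in a smallest cycle. *)

(* A finite simple graph is a symmetric irreflexive
   relation e on a finType T (vertex set V = T). *)
From mathcomp Require Import all_boot all_order all_algebra.
Set Implicit Arguments. Unset Strict Implicit. Unset Printing Implicit Defensive.
Import Order.TTheory GRing.Theory Num.Theory.

Definition edges (T : finType) (e : rel T) : {set {set T}} :=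
  [set [set p.1; p.2] | p in [set p : T * T | e p.1 p.2]].

Definition adjA (T : finType) (A : {set {set T}}) : rel T :=
  fun x y => [set x; y] \in A.

Definition ncomp (T : finType) (A : {set {set T}}) : nat :=
  n_comp (adjA A) T.

Definition grank (T : finType) (A : {set {set T}}) : nat :=
  #|T| - ncomp A.

Local Open Scope ring_scope.

Definition rho (T : finType) (A : {set {set T}}) : rat :=
  (#|A|%:R) / ((grank A)%:R).

Definition rhoG (T : finType) (e : rel T) : rat := rho (edges e).

Definition uniformly_dense (T : finType) (e : rel T) : Prop :=
  forall A : {set {set T}}, A \subset edges e -> A != set0 -> rho A <= rhoG e.

Local Close Scope ring_scope.

Definition is_graph_cycle (T : finType) (e : rel T) (c : seq T) : bool :=
  ucycleb e c && (2 < size c).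

Definition has_cycle_of_length (T : finType) (e : rel T) (k : nat) : bool :=
  [exists t : k.-tuple T, is_graph_cycle e (tval t)].

(* Girth: the least length of a cycle (cycles have at most #|T| vertices);
   equals #|T|.+1 when there is no cycle (not used in that case). *)
Definition girth (T : finType) (e : rel T) : nat :=
  find (has_cycle_of_length e) (iota 0 #|T|.+1).

From mathcomp Require Import all_boot all_order all_algebra.
From mathcomp Require Import lra zify.
Set Implicit Arguments. Unset Strict Implicit. Unset Printing Implicit Defensive.
Import Order.TTheory GRing.Theory Num.Theory.

(* The edge set A of any cycle C of length k has |A| = k and, since A lives on
   the k vertices of C and is nonempty, 1 <= rank(A) <= k - 1.  Uniform density
   gives k / rank(A) = rho(A) <= rho(G), so rho(G) (k - 1) >= k, i.e.
   k >= rho(G) / (rho(G) - 1).  Apply this to a shortest cycle. *)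

Lemma girth_cycle (T : finType) (e : rel T) :
  (exists c : seq T, is_graph_cycle e c) ->
  exists2 c, is_graph_cycle e c & size c = girth e.
Proof.
case=> c0 c0_cycle.
have has_len : has (has_cycle_of_length e) (iota 0 #|T|.+1).
  apply/hasP; exists (size c0); last by apply/existsP; exists (in_tuple c0).
  move: c0_cycle => /andP[/andP[_ c0_uniq] _].
  by rewrite mem_iota add0n ltnS -(card_uniqP c0_uniq) max_card.
have := nth_find 0 has_len; rewrite nth_iota ?add0n; last first.
  by move: has_len; rewrite has_find size_iota.
by case/existsP=> t t_cycle; exists (tval t); rewrite ?size_tuple.
Qed.

Lemma next_next_neq (T : eqType) (c : seq T) x :
  uniq c -> 2 < size c -> x \in c -> next c (next c x) != x.
Proof.
move=> c_uniq c_size cx; case: (rot_to cx) => i s c_rot.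
rewrite -!(next_rot i c_uniq) c_rot.
have : 2 < size (rot i c) by rewrite size_rot.
have : uniq (rot i c) by rewrite rot_uniq.
rewrite c_rot; case: s {c_rot} => [|y [|z r]] //= /andP[xNyzr _] _.
rewrite eqxx ifN ?eqxx; first by apply: contraNneq xNyzr => ->; rewrite !inE eqxx orbT.
by apply: contraNneq xNyzr => ->; rewrite inE eqxx.
Qed.

Section SpanningSubgraph.

Variables (T : finType) (A : {set {set T}}).

Lemma adjA_sym : symmetric (adjA A).
Proof. by move=> x y; rewrite /adjA setUC. Qed.

Let adjA_connect_sym : connect_sym (adjA A) := sym_connect_sym adjA_sym.

Lemma ncompE : ncomp A = #|[set x | roots (adjA A) x]|.
Proof. by apply: eq_card => x; rewrite !inE andbT. Qed.

Lemma connect_notin_support (S : {set T}) x y :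
  (forall s, s \in A -> s \subset S) -> x \notin S ->
  connect (adjA A) x y -> y = x.
Proof.
move=> A_S xNS /connectP[[|z p] //= /andP[xz _] _].
by move: xNS; rewrite (subsetP (A_S _ xz)) ?set21.
Qed.

Lemma grank_le_support (S : {set T}) :
  (forall s, s \in A -> s \subset S) -> S != set0 -> grank A <= #|S|.-1.
Proof.
move=> A_S /set0Pn[x0 Sx0].
pose r0 := fingraph.root (adjA A) x0.
have S_r0 : r0 \in S.
  apply: contraT => r0NS.
  have x0_r0 : x0 = r0.
    apply: connect_notin_support A_S r0NS _.
    by rewrite adjA_connect_sym connect_root.
  by rewrite -x0_r0 Sx0 in r0NS.
have roots_sup : r0 |: ~: S \subset [set x | roots (adjA A) x].
  apply/subsetP => x; rewrite !inE => /orP[/eqP-> | xNS].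
    exact: roots_root.
  by apply/eqP; apply: connect_notin_support A_S xNS (connect_root _ _).
have := subset_leq_card roots_sup.
rewrite -ncompE cardsU1 !inE S_r0 /= /grank -(cardsC S).
have : 0 < #|S| by apply/card_gt0P; exists x0.
lia.
Qed.

Lemma grank_gt0 x y : x != y -> [set x; y] \in A -> 0 < grank A.
Proof.
move=> xNy Axy.
have same_root : fingraph.root (adjA A) x = fingraph.root (adjA A) y.
  exact/(fingraph.rootP adjA_connect_sym)/connect1.
have [z zNroot] : exists z, ~~ roots (adjA A) z.
  have [rx | ] := boolP (roots (adjA A) x); last by exists x.
  exists y; apply: contraNN xNy => ry.
  by rewrite -(eqP rx) -(eqP ry) same_root.
have roots_sub : [set x | roots (adjA A) x] \subset [set~ z].
  by apply/subsetP => w; rewrite !inE; apply: contraTneq => ->.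
have := subset_leq_card roots_sub; rewrite cardsC1 -ncompE /grank.
by have := max_card (mem [set z]); rewrite cards1; lia.
Qed.

End SpanningSubgraph.

Section CycleEdges.

Variables (T : finType) (e : rel T) (c : seq T).
Hypothesis c_cycle : is_graph_cycle e c.

Definition cycle_edges : {set {set T}} := [set [set x; next c x] | x in c].

Let c_uniq : uniq c. Proof. by case/andP: c_cycle => /andP[]. Qed.
Let c_size : 2 < size c. Proof. by case/andP: c_cycle. Qed.

Lemma cycle_edges_sub : cycle_edges \subset edges e.
Proof.
apply/subsetP => _ /imsetP[x cx ->]; apply/imsetP; exists (x, next c x) => //.
by rewrite inE; apply: next_cycle cx; case/andP: c_cycle => /andP[].
Qed.

Lemma card_cycle_edges : #|cycle_edges| = size c.
Proof.
rewrite card_in_imset ?(card_uniqP c_uniq) // => x y cx cy /= xy_edge.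
apply/eqP; apply: contraT => xNy.
have : x \in [set y; next c y] by rewrite -xy_edge set21.
have : y \in [set x; next c x] by rewrite xy_edge set21.
rewrite !in_set2 eq_sym (negbTE xNy) /= => /eqP y_next /eqP x_next.
by move: (next_next_neq c_uniq c_size cx); rewrite -y_next -x_next eqxx.
Qed.

Lemma grank_cycle_edges : 0 < grank cycle_edges < size c.
Proof.
have /hasP[x0 cx0 _] : has predT c by rewrite has_predT; lia.
apply/andP; split.
  apply: (@grank_gt0 _ _ x0 (next c x0)); last exact: imset_f.
  apply: contraNneq (next_next_neq c_uniq c_size cx0) => x0_next.
  by rewrite -!x0_next.
have c_support : forall s, s \in cycle_edges -> s \subset [set x in c].
  move=> _ /imsetP[x cx ->]; apply/subsetP => y.
  by rewrite !inE => /orP[]/eqP->; rewrite ?mem_next.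
have c_set0 : [set x in c] != set0 by apply/set0Pn; exists x0; rewrite inE.
apply: leq_ltn_trans (grank_le_support c_support c_set0) _.
by rewrite cardsE (card_uniqP c_uniq) ltn_predL; lia.
Qed.

End CycleEdges.

Local Open Scope ring_scope.

Lemma ler_div_subr1 (R : realFieldType) (r : R) (k m : nat) :
  (0 < m < k)%N -> k%:R / m%:R <= r -> r / (r - 1) <= k%:R.
Proof.
case/andP; rewrite -(ltr_nat R) => m_gt0 m_lt_k.
rewrite ler_pdivrMr // => k_le_rm.
have m_le_k1 : m%:R <= k%:R - 1 :> R by rewrite lerBrDr natr1 ler_nat.
have k_le : k%:R <= r * (k%:R - 1) by nra.
have r_gt1 : 1 < r by nra.
by rewrite ler_pdivrMr ?subr_gt0 //; nra.
Qed.

Lemma density_le_cycle_size (T : finType) (e : rel T) (c : seq T) :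
  uniformly_dense e -> is_graph_cycle e c ->
  rhoG e / (rhoG e - 1) <= (size c)%:R.
Proof.
move=> dense c_cycle.
apply: (ler_div_subr1 (grank_cycle_edges c_cycle)).
rewrite -(card_cycle_edges c_cycle); apply: dense; first exact: cycle_edges_sub.
by rewrite -card_gt0 (card_cycle_edges c_cycle); case/andP: c_cycle; lia.
Qed.

Theorem proposition3p8 (T : finType) (e : rel T)
  (esym : symmetric e) (eirr : irreflexive e)
  (hud : uniformly_dense e)
  (hcyc : exists c : seq T, is_graph_cycle e c) :
  rhoG e / (rhoG e - 1) <= (girth e)%:R.
Proof.
have [c c_cycle <-] := girth_cycle hcyc.
exact: density_le_cycle_size hud c_cycle.
Qed.
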